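(* Assume $f$ satisfies conditions (A0)–(A3) below. Then there exists a constant $C>0$ such that every $2\pi$-periodic solution $x$ of the system $\ddot x(t)=f(t,x(t),\mathbf x_t,\dot x(t))$ satisfies $|x(t)|<C$, $|\dot x(t)|<C$ and $|\ddot x(t)|<C$ for all $t\in\mathbb R$.
   Context: Let $n,m\ge 1$ be integers, $\mathbf V=\mathbb R^n$ with Euclidean inner product $x\bullet z$ and norm $|x|$. For $\mathbf y=(y^1,\dots,y^m)\in\mathbf V^m$ put $|\mathbf y|:=\max_{1\le j\le m}|y^j|$. Fix reals $0=\tau_0<\tau_1<\dots<\tau_m<2\pi$ with $\tau_{m-j+1}=2\pi-\tau_j$ for $j=1,\dots,m$. Let $f:\mathbb R\times\mathbf V\times\mathbf V^m\times\mathbf V\to\mathbf V$, and for a function $x:\mathbb R\to\mathbf V$ put $\mathbf x_t:=(x(t-\tau_1),\dots,x(t-\tau_m))$. A $2\pi$-periodic solution is a $C^2$ function $x:\mathbb R\to\mathbf V$ with $x(t+2\pi)=x(t)$ and $\ddot x(t)=f(t,x(t),\mathbf x_t,\dot x(t))$ for all $t$. Conditions: (A0) $f$ is continuous and $f(t+2\pi,x,\mathbf y,z)=f(t,x,\mathbf y,z)$ for all arguments. (A1) There is $R>0$ such that for all $t\in\mathbb R$, $x,z\in\mathbf V$, $\mathbf y\in\mathbf V^m$: if $|x|\ge R$, $|\mathbf y|\le|x|$ and $x\bullet z=0$, then $x\bullet f(t,x,\mathbf y,z)>0$. (A2) There is a continuous $\phi:[0,\infty)\to(0,\infty)$ with $\int_0^\infty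 \frac{s\,ds}{\phi(s)}=\infty$ and $|f(t,x,\mathbf y,z)|\le\phi(|z|)$ for all $t$, all $|x|\le R$, $|\mathbf y|\le R$ and all $z$. (A3) There are constants $\alpha>0,K>0$ with $|f(t,x,\mathbf y,z)|\le\alpha\big(x\bullet f(t,x,\mathbf y,z)+|z|^2\big)+K$ for all $t$, all $|x|\le R$, $|\mathbf y|\le R$ and all $z$. *)

From HB Require Import structures.
From mathcomp Require Import all_boot all_order all_algebra.
From mathcomp Require Import all_classical all_reals all_analysis.
Set Implicit Arguments. Unset Strict Implicit. Unset Printing Implicit Defensive.
Import Order.TTheory GRing.Theory Num.Theory.
Import numFieldNormedType.Exports.
Local Open Scope classical_set_scope.
Local Open Scope ring_scope.

Section Defs.
Variables (R : realType) (n m : nat).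

Definition dotv (u v : 'rV[R]_n) : R := (u *m v^T) 0 0.
Definition enorm (u : 'rV[R]_n) : R := Num.sqrt (dotv u u).

(* An element y = (y^1,...,y^m) of V^m is stored as the m x n matrix whose
   j-th row is y^j; |y| := max_j |y^j|. *)
Definition mnorm (y : 'M[R]_(m, n)) : R := \big[Num.max/0]_(j < m) enorm (row j y).

Definition delays (tau : 'I_m -> R) (x : R -> 'rV[R]_n) (t : R) : 'M[R]_(m, n) :=
  \matrix_(j < m, k < n) x (t - tau j) 0 k.

Definition periodic_solution (tau : 'I_m -> R)
  (f : R -> 'rV[R]_n -> 'M[R]_(m, n) -> 'rV[R]_n -> 'rV[R]_n)
  (x : R -> 'rV[R]_n) : Prop :=
  [/\ (forall t, x (t + 2 * pi) = x t),
      (forall t, derivable x t 1),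
      (forall t, derivable (derive1 x) t 1),
      continuous (derive1 (derive1 x)) &
      (forall t, derive1 (derive1 x) t = f t (x t) (delays tau x t) (derive1 x t))].

End Defs.

(* Let t0 maximise |x|^2.  There x.x' = 0 and (|x|^2)'' = 2 (|x'|^2 + x.x'') <= 0,
   while |x_t0| <= |x(t0)|; so |x(t0)| >= R would contradict (A1).  Hence |x| < R,
   and along the solution (A3) reads |x''| <= alpha (x.x')' + K.  Each coordinate of
   x' vanishes somewhere (at a maximum of that coordinate of x) and is dominated by
   w = alpha x.x' + K t, i.e. |x'_k(b) - x'_k(a)| <= w(b) - w(a) for a <= b; over one
   period w grows by exactly 2 pi K because x.x' is periodic.  This bounds x', and
   (A2) then bounds x'' by the maximum of phi on the range of |x'|. *)

From mathcomp Require Import all_boot all_order all_algebra.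
From mathcomp Require Import all_classical all_reals all_analysis.
From mathcomp Require Import lra ring.
Import Order.TTheory GRing.Theory Num.Theory.
Import numFieldNormedType.Exports.
Local Open Scope classical_set_scope.
Local Open Scope ring_scope.

Set Implicit Arguments.

Section Periodic.
Context {R : realType}.

Lemma periodicz (V : zmodType) (g : R -> V) (p : R) : periodic g p ->
  forall (k : int) t, g (t + p *~ k) = g t.
Proof.
move=> gp [k|k] t; first exact: periodicn.
by rewrite NegzE mulrNz -[in RHS](subrK (p *+ k.+1) t) periodicn.
Qed.

Lemma periodic_reduce {V : zmodType} {g : R -> V} {p : R} (c : R) :
  0 < p -> periodic g p -> forall t, exists2 t', c <= t' <= c + p & g t' = g t.
Proof.
move=> p0 gp t; set k := Num.floor ((t - c) / p).
exists (t + p *~ (- k)); last exact: periodicz.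
rewrite mulrNz -mulrzr; apply/andP; split.
- by have := floor_le ((t - c) / p); rewrite -/k ler_pdivlMr //; lra.
- by have := floorD1_gt ((t - c) / p); rewrite -/k ltr_pdivrMr // intrD mulrDl mul1r; lra.
Qed.

Lemma periodic_max (g : R -> R) (p : R) : 0 < p -> periodic g p -> continuous g ->
  exists c, forall t, g t <= g c.
Proof.
move=> p0 gp cg; have [c _ gc] := EVT_max (ltW p0) (continuous_subspaceT cg).
exists c => t; have [t' /andP[t'0 t'p] <-] := periodic_reduce 0 p0 gp t.
by apply: gc; rewrite in_itv /= t'0 -[p]add0r.
Qed.

Lemma derive1_periodic (V : normedModType R) (g : R -> V) (p : R) :
  periodic g p -> periodic (derive1 g) p.
Proof.
move=> gp t; rewrite !derive1E /derive.
suff -> : (fun h : R => h^-1 *: ((g \o shift (t + p)) (h *: 1) - g (t + p))) =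
  (fun h => h^-1 *: ((g \o shift t) (h *: 1) - g t)) by [].
by apply: funext => h /=; rewrite addrA !gp.
Qed.

End Periodic.

Section RealDerivative.
Context {R : realType}.
Implicit Types (g dg ddg h dh w dw : R -> R) (a b c p s t : R).

Lemma derivable1_continuous (V : normedModType R) (g : R -> V) t :
  derivable g t 1 -> {for t, continuous g}.
Proof. by move=> /derivable1_diffP /differentiable_continuous. Qed.

Lemma is_derive_eq0_at_max {g dg c} : (forall s, is_derive s 1 g (dg s)) ->
  (forall t, g t <= g c) -> dg c = 0.
Proof.
move=> gd gc; have g'c : is_derive c 1 g 0.
  apply: (@derive1_at_max _ g (c - 1) (c + 1)); first lra.
  - by move=> s _; have [] := gd s.
  - by rewrite in_itv /=; apply/andP; split; lra.
  - by move=> s _; exact: gc.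
by rewrite -(derive_val (is_derive := gd c)) (derive_val (is_derive := g'c)).
Qed.

Lemma is_derive_ge0_ndecr {g dg} : (forall s, is_derive s 1 g (dg s)) ->
  (forall s, 0 <= dg s) -> {homo g : a b / a <= b}.
Proof.
move=> gd dg0 a b ab; apply: (@ger0_derive1_ndecr R g a b) => //.
- by move=> s _; rewrite derive1E (derive_val (is_derive := gd s)).
- by apply: continuous_subspaceT => s; have [/derivable1_continuous] := gd s.
Qed.

Lemma derive2_le0_at_max {g dg ddg c} :
  (forall s, is_derive s 1 g (dg s)) -> (forall s, is_derive s 1 dg (ddg s)) ->
  {for c, continuous ddg} -> (forall t, g t <= g c) -> ddg c <= 0.
Proof.
move=> gd dgd ddgc gc; rewrite leNgt; apply/negP => ddg0.
have [e e0 ddg_pos] : exists2 e : R, 0 < e & forall s, `|c - s| < e -> 0 < ddg s.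
  have : \forall s \near c, 0 < ddg s by exact: cvgr_gt ddgc _ ddg0.
  move=> /nbhs_ballP[e /= e0 ce_pos].
  by exists e => // s cs; apply: ce_pos.
have cont_dg : continuous dg by move=> s; have [/derivable1_continuous] := dgd s.
have cont_g : continuous g by move=> s; have [/derivable1_continuous] := gd s.
have dg_pos s : c < s < c + e -> 0 < dg s.
  move=> /andP[cs se].
  have [d /[!in_itv] /= /andP[cd ds] dgs] :=
    MVT cs (fun u _ => dgd u) (continuous_subspaceT cont_dg).
  move: dgs; rewrite (is_derive_eq0_at_max gd gc) subr0 => ->.
  rewrite mulr_gt0 ?subr_gt0 // ddg_pos //.
  by rewrite ltr_norml; apply/andP; split; lra.
have ce : c < c + e / 2 by lra.
have [d /[!in_itv] /= /andP[cd de] gce] :=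
  MVT ce (fun u _ => gd u) (continuous_subspaceT cont_g).
have : 0 < g (c + e / 2) - g c.
  by rewrite gce mulr_gt0 ?subr_gt0 // dg_pos //; apply/andP; split; lra.
by rewrite subr_gt0 ltNge gc.
Qed.

Lemma ler_dist_majorant {h dh w dw} :
  (forall s, is_derive s 1 h (dh s)) -> (forall s, is_derive s 1 w (dw s)) ->
  (forall s, `|dh s| <= dw s) -> forall a b, a <= b -> `|h b - h a| <= w b - w a.
Proof.
move=> hd wd dhw a b ab.
have dh_bounds s : - dw s <= dh s <= dw s by rewrite -ler_norml.
have wDh : w a + h a <= w b + h b.
  apply: (is_derive_ge0_ndecr (fun s => is_deriveD (wd s) (hd s))) => // s.
  by rewrite -[dw s]opprK addrC subr_ge0; case/andP: (dh_bounds s).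
have wBh : w a - h a <= w b - h b.
  apply: (is_derive_ge0_ndecr (fun s => is_deriveB (wd s) (hd s))) => // s.
  by rewrite subr_ge0; case/andP: (dh_bounds s).
by rewrite ler_norml; apply/andP; split; lra.
Qed.

Lemma periodic_majorant_bound {h w p c} : 0 < p -> periodic h p -> h c = 0 ->
  (forall a b, a <= b -> `|h b - h a| <= w b - w a) ->
  forall t, `|h t| <= w (c + p) - w c.
Proof.
move=> p0 hp hc hw t; have [t' /andP[ct' t'p] <-] := periodic_reduce c p0 hp t.
rewrite -[h t']subr0 -hc; apply: le_trans (hw _ _ ct') _.
by have := le_trans (normr_ge0 _) (hw _ _ t'p); lra.
Qed.

End RealDerivative.

Lemma is_derive_mx_coord (R : realType) (p q : nat) (u : R -> 'M[R]_(p, q)) t i j :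
  derivable u t 1 -> is_derive t 1 (fun s => u s i j) (derive1 u t i j).
Proof.
move=> du; have /derivable_mxP/(_ i j) dij := du.
by split=> //; rewrite derive1E derive_mx // mxE.
Qed.

Section Euclidean.
Context {R : realType} {n : nat}.
Implicit Types u v : 'rV[R]_n.

Lemma dotvE u v : dotv u v = \sum_k u 0 k * v 0 k.
Proof. by rewrite /dotv !mxE; apply: eq_bigr => k _; rewrite mxE. Qed.

Lemma dotvC u v : dotv u v = dotv v u.
Proof. by rewrite !dotvE; apply: eq_bigr => k _; rewrite mulrC. Qed.

Lemma dotvv_ge0 u : 0 <= dotv u u.
Proof. by rewrite dotvE sumr_ge0 // => k _; rewrite -expr2 sqr_ge0. Qed.

Lemma enorm_ge0 u : 0 <= enorm u.
Proof. exact: sqrtr_ge0. Qed.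

Lemma sqr_enorm u : enorm u ^+ 2 = dotv u u.
Proof. by rewrite /enorm sqr_sqrtr // dotvv_ge0. Qed.

Lemma ler_enorm {u v} : dotv u u <= dotv v v -> enorm u <= enorm v.
Proof. exact: ler_wsqrtr. Qed.

Lemma coord_le_enorm u k : `|u 0 k| <= enorm u.
Proof.
rewrite -sqrtr_sqr ler_wsqrtr // dotvE (bigD1 k) //= expr2 lerDl.
by rewrite sumr_ge0 // => i _; rewrite -expr2 sqr_ge0.
Qed.

Lemma enorm_le_coord u (B : R) : 0 <= B -> (forall k, `|u 0 k| <= B) ->
  enorm u <= Num.sqrt (n%:R * B ^+ 2).
Proof.
move=> B0 uB; rewrite ler_wsqrtr // dotvE.
rewrite (_ : n%:R * B ^+ 2 = \sum_(k < n) B ^+ 2); last first.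
  by rewrite sumr_const card_ord mulr_natl.
apply: ler_sum => k _; rewrite -expr2 -real_normK ?num_real //.
by rewrite lerXn2r ?nnegrE ?normr_ge0.
Qed.

Lemma is_derive_dotv (u v : R -> 'rV[R]_n) t : derivable u t 1 -> derivable v t 1 ->
  is_derive t 1 (fun s => dotv (u s) (v s))
    (dotv (derive1 u t) (v t) + dotv (u t) (derive1 v t)).
Proof.
move=> du dv; have -> : (fun s => dotv (u s) (v s)) =
    \sum_k ((fun s => u s 0 k) * (fun s => v s 0 k)).
  by apply: funext => s; rewrite dotvE fct_sumE.
apply: is_derive_eq.
  by apply: is_derive_sum => k; apply: is_deriveM; apply: is_derive_mx_coord.
rewrite !dotvE -big_split; apply: eq_bigr => k _ /=.
by rewrite addrC; congr (_ + _); exact: mulrC.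
Qed.

Lemma continuous_dotv (T : topologicalType) (u v : T -> 'rV[R]_n) :
  continuous u -> continuous v -> continuous (fun s => dotv (u s) (v s)).
Proof.
move=> cu cv; have -> : (fun s => dotv (u s) (v s)) =
    (fun s => \sum_k u s 0 k * v s 0 k) by apply: funext => s; rewrite dotvE.
have coord_cont (w : T -> 'rV[R]_n) k : continuous w -> continuous (fun s => w s 0 k).
  by move=> cw s; exact: (continuous_comp (cw s) (@coord_continuous R 1 n 0 k (w s))).
apply: (continuous_big add_continuous) => k _ s.
by apply: continuousM; apply: coord_cont.
Qed.

End Euclidean.

Section Delays.
Context {R : realType} {n m : nat} (tau : 'I_m -> R) {x : R -> 'rV[R]_n}.

Lemma row_delays t j : row j (delays tau x t) = x (t - tau j).
Proof. by apply/rowP => k; rewrite !mxE. Qed.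

Lemma mnorm_delays_le {B : R} : (forall s, enorm (x s) <= B) ->
  forall t, mnorm (delays tau x t) <= B.
Proof.
move=> xB t; rewrite /mnorm; apply: bigmax_le => [|j _].
  exact: le_trans (enorm_ge0 (x t)) (xB t).
by rewrite row_delays.
Qed.

End Delays.

Lemma twopi_gt0 {R : realType} : 0 < 2 * pi :> R.
Proof. by rewrite mulr_gt0 // pi_gt0. Qed.

Section PeriodicSolution.
Context {R : realType} {n m : nat} {tau : 'I_m -> R}
  {f : R -> 'rV[R]_n -> 'M[R]_(m, n) -> 'rV[R]_n -> 'rV[R]_n} {x : R -> 'rV[R]_n}.
Hypothesis xsol : periodic_solution tau f x.
Implicit Types s t : R.

Local Notation x' := (derive1 x).
Local Notation x'' := (derive1 (derive1 x)).

Lemma sol_periodic : periodic x (2 * pi).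
Proof. by case: xsol. Qed.

Lemma sol_derivable t : derivable x t 1.
Proof. by case: xsol. Qed.

Lemma sol_derivable1 t : derivable x' t 1.
Proof. by case: xsol. Qed.

Lemma sol_ode t : x'' t = f t (x t) (delays tau x t) (x' t).
Proof. by case: xsol. Qed.

Lemma sol_continuous : continuous x.
Proof. by move=> t; apply/derivable1_continuous/sol_derivable. Qed.

Lemma sol_continuous1 : continuous x'.
Proof. by move=> t; apply/derivable1_continuous/sol_derivable1. Qed.

Lemma sol_continuous2 : continuous x''.
Proof. by case: xsol. Qed.

Definition xx t := dotv (x t) (x t).
Definition xv t := dotv (x t) (x' t).
Definition xv' t := dotv (x' t) (x' t) + dotv (x t) (x'' t).

Lemma is_derive_xx t : is_derive t 1 xx (2 * xv t).
Proof.
apply: is_derive_eq; first exact: is_derive_dotv (sol_derivable t) (sol_derivable t).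
by rewrite /xv dotvC -mulr2n mulr_natl.
Qed.

Lemma is_derive_xv t : is_derive t 1 xv (xv' t).
Proof. exact: is_derive_dotv (sol_derivable t) (sol_derivable1 t). Qed.

Lemma continuous_xx : continuous xx.
Proof. exact: continuous_dotv sol_continuous sol_continuous. Qed.

Lemma continuous_xv' : continuous xv'.
Proof.
move=> t; apply: (@continuousD _ _ _ (fun s => dotv (x' s) (x' s))
                                    (fun s => dotv (x s) (x'' s))).
  exact: (continuous_dotv sol_continuous1 sol_continuous1) t.
exact: (continuous_dotv sol_continuous sol_continuous2) t.
Qed.

Lemma xx_periodic : periodic xx (2 * pi).
Proof. by move=> t; rewrite /xx sol_periodic. Qed.

Lemma xv_periodic : periodic xv (2 * pi).
Proof. by move=> t; rewrite /xv sol_periodic (derive1_periodic sol_periodic). Qed.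

Lemma sol_norm_lt {Rr : R}
  (hA1 : forall t x y z, Rr <= enorm x -> mnorm y <= enorm x -> dotv x z = 0 ->
           0 < dotv x (f t x y z)) :
  forall t, enorm (x t) < Rr.
Proof.
have [t0 xx_max] := periodic_max twopi_gt0 xx_periodic continuous_xx.
suff x_lt : enorm (x t0) < Rr.
  by move=> t; apply: le_lt_trans x_lt; apply/ler_enorm/xx_max.
rewrite ltNge; apply/negP => Rx.
have xv0 : xv t0 = 0.
  have /eqP := is_derive_eq0_at_max is_derive_xx xx_max.
  by rewrite mulf_eq0 pnatr_eq0 => /eqP.
have delays_le := mnorm_delays_le tau (fun s => ler_enorm (xx_max s)) t0.
have := hA1 t0 (x t0) (delays tau x t0) (x' t0) Rx delays_le xv0.
rewrite -sol_ode => xacc_gt0.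
have : 2 * xv' t0 <= 0.
  apply: (derive2_le0_at_max (ddg := fun s => 2 * xv' s) is_derive_xx _ _ xx_max).
    by move=> s; have := is_deriveZ 2 (is_derive_xv s).
  by apply: continuousM; [exact: cst_continuous | exact: continuous_xv'].
by rewrite pmulr_rle0 // leNgt ltr_wpDl ?dotvv_ge0.
Qed.

Lemma sol_acc_le {Rr alpha K : R} : (forall t, enorm (x t) < Rr) ->
  (forall t x y z, enorm x <= Rr -> mnorm y <= Rr ->
     enorm (f t x y z) <= alpha * (dotv x (f t x y z) + enorm z ^+ 2) + K) ->
  forall t, enorm (x'' t) <= alpha * xv' t + K.
Proof.
move=> x_lt hA3 t; have x_le s : enorm (x s) <= Rr by exact: ltW.
have := hA3 t (x t) (delays tau x t) (x' t) (x_le t) (mnorm_delays_le tau x_le t).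
by rewrite -sol_ode sqr_enorm /xv' [dotv (x' t) _ + _]addrC.
Qed.

Lemma sol_vel_coord_zero k : exists c, x' c 0 k = 0.
Proof.
have xk_periodic : periodic (fun s => x s 0 k) (2 * pi).
  by move=> s; rewrite sol_periodic.
have xk_der s := is_derive_mx_coord 0 k (sol_derivable s).
have xk_cont : continuous (fun s => x s 0 k).
  by move=> s; have [/derivable1_continuous] := xk_der s.
have [c xk_max] := periodic_max twopi_gt0 xk_periodic xk_cont.
by exists c; exact: is_derive_eq0_at_max xk_der xk_max.
Qed.

Lemma sol_vel_coord_le {alpha K : R} :
  (forall t, enorm (x'' t) <= alpha * xv' t + K) -> forall k t, `|x' t 0 k| <= 2 * pi * K.
Proof.
move=> acc_le k t; pose w s := alpha * xv s + K * s.
have w_der s : is_derive s 1 w (alpha * xv' s + K * 1).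
  exact: is_deriveD (is_deriveZ alpha (is_derive_xv s)) (is_deriveZ K (is_derive_id s 1)).
have x'k_periodic : periodic (fun s => x' s 0 k) (2 * pi).
  by move=> s; rewrite (derive1_periodic sol_periodic).
have x'k_der s := is_derive_mx_coord 0 k (sol_derivable1 s).
have x''k_le s : `|x'' s 0 k| <= alpha * xv' s + K * 1.
  by rewrite mulr1; exact: le_trans (coord_le_enorm _ _) (acc_le s).
have [c x'c] := sol_vel_coord_zero k.
have w_period : w (c + 2 * pi) - w c = 2 * pi * K by rewrite /w xv_periodic; ring.
rewrite -w_period; apply: periodic_majorant_bound twopi_gt0 x'k_periodic x'c _ t.
exact: ler_dist_majorant x'k_der w_der x''k_le.
Qed.

End PeriodicSolution.

Theorem theorem3p1 (R : realType) (n m : nat) (hn : (1 <= n)%N) (hm : (1 <= m)%N)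
  (tau : 'I_m -> R)
  (f : R -> 'rV[R]_n -> 'M[R]_(m, n) -> 'rV[R]_n -> 'rV[R]_n)
  (* 0 = tau_0 < tau_1 < ... < tau_m < 2 pi *)
  (htau0 : forall j : 'I_m, 0 < tau j)
  (htau_mono : forall i j : 'I_m, (i < j)%N -> tau i < tau j)
  (htau_lt : forall j : 'I_m, tau j < 2 * pi)
  (* tau_{m-j+1} = 2 pi - tau_j *)
  (htau_sym : forall j : 'I_m, tau (rev_ord j) = 2 * pi - tau j)
  (* (A0) *)
  (hA0c : continuous (fun p : R * 'rV[R]_n * 'M[R]_(m, n) * 'rV[R]_n =>
                        f p.1.1.1 p.1.1.2 p.1.2 p.2))
  (hA0p : forall t x y z, f (t + 2 * pi) x y z = f t x y z)
  (* (A1) *)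
  (Rr : R) (hRr : 0 < Rr)
  (hA1 : forall t x y z, Rr <= enorm x -> mnorm y <= enorm x -> dotv x z = 0 ->
           0 < dotv x (f t x y z))
  (* (A2) *)
  (phi : R -> R)
  (hphic : {within [set s : R | 0 <= s], continuous phi})
  (hphip : forall s, 0 <= s -> 0 < phi s)
  (hphiint : (\int[lebesgue_measure]_(s in [set s : R | (0 <= s)%R]) (s / phi s)%:E = +oo)%E)
  (hA2 : forall t x y z, enorm x <= Rr -> mnorm y <= Rr ->
           enorm (f t x y z) <= phi (enorm z))
  (* (A3) *)
  (alpha K : R) (halpha : 0 < alpha) (hK : 0 < K)
  (hA3 : forall t x y z, enorm x <= Rr -> mnorm y <= Rr ->
           enorm (f t x y z) <= alpha * (dotv x (f t x y z) + enorm z ^+ 2) + K) :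
  exists C : R, 0 < C /\
    forall x : R -> 'rV[R]_n, periodic_solution tau f x ->
      forall t, [/\ enorm (x t) < C, enorm (derive1 x t) < C & enorm (derive1 (derive1 x) t) < C].
Proof.
set V : R := Num.sqrt (n%:R * (2 * pi * K) ^+ 2).
have V_ge0 : 0 <= V := sqrtr_ge0 _.
have sub_itv0V : `[0, V] `<=` [set s : R | 0 <= s].
  by move=> s; rewrite /= in_itv /= => /andP[].
have [c /[!in_itv] /= /andP[c_ge0 _] phi_max] :=
  EVT_max V_ge0 (continuous_subspaceW sub_itv0V hphic).
have phi_c_gt0 := hphip c c_ge0.
exists (Rr + V + phi c + 1); split=> [|x xsol t]; first lra.
have x_lt := sol_norm_lt xsol hA1.
have acc_le := sol_acc_le xsol x_lt hA3.
have vel_le : enorm (derive1 x t) <= V.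
  apply: enorm_le_coord => [|k]; last by have := sol_vel_coord_le xsol acc_le k t.
  by rewrite !mulr_ge0 ?ltW ?pi_gt0.
have acc_phi : enorm (derive1 (derive1 x) t) <= phi c.
  have x_le s : enorm (x s) <= Rr by exact: ltW.
  rewrite (sol_ode xsol).
  apply: le_trans (hA2 _ _ _ _ (x_le t) (mnorm_delays_le tau x_le t)) _.
  by apply: phi_max; rewrite in_itv /= enorm_ge0 vel_le.
have := enorm_ge0 (x t); have := x_lt t; split; lra.
Qed.
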